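(* Consider the Markov process on $\{0,1\}^{\{1,2,3,\dots\}}$ described in the context. It has a stationary distribution under which, for every $i\ge1$, $$P(A_i=1)=\frac{\lambda_a}{\lambda}\Bigl(\frac{\lambda}{\lambda+\delta}\Bigr)^i,\qquad P(A_i=1,A_{i+1}=1)=\frac{\lambda_a^2}{\lambda(\lambda+\delta)}\Bigl(\frac{\lambda}{\lambda+2\delta}\Bigr)^i,$$ and these are the limits as $t\to\infty$ of $P_t(A_i=1)$ and $P_t(A_i=1,A_{i+1}=1)$ from any initial distribution.
   Context: Parameters $\lambda_a,\lambda_b>0$, $\delta>0$, $\lambda=\lambda_a+\lambda_b$. A configuration is a sequence $(A_1,A_2,\dots)\in\{0,1\}^{\{1,2,\dots\}}$ ($A_i=1$: fast vehicle, $A_i=0$: slow vehicle, index $1$ being the most recently arrived). Dynamics in continuous time: at rate $\lambda_a$ an arrival occurs, whereupon the sequence is shifted ($A_{i+1}\leftarrow A_i$ for all $i\ge1$) and $A_1$ is set to $1$; at rate $\lambda_b$ the same shift occurs and $A_1$ is set to $0$; independently, each site $i$ with $A_i=1$ switches to $A_i=0$ at rate $\delta$. *)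

From Stdlib Require Import Reals Lra List.
Import ListNotations.
Open Scope R_scope.

(* A state of the first n sites (A_1,...,A_n) is a list of booleans of
   length n; the head is A_1 (the most recently arrived vehicle);
   true = fast, false = slow. *)

Fixpoint states (n : nat) : list (list bool) :=
  match n with
  | O => [nil]
  | S m => map (cons true) (states m) ++ map (cons false) (states m)
  end.

Definition sumL {A : Type} (f : A -> R) (l : list A) : R :=
  fold_right (fun x acc => f x + acc) 0 l.

(* arrival of a vehicle of type b: shift right, A_1 := b; the last of the
   first n sites falls out of the observed window *)
Definition shift (b : bool) (s : list bool) : list bool :=
  firstn (length s) (b :: s).

Fixpoint flips (s : list bool) : list (list bool) :=
  match s with
  | nil => nil
  | a :: s' => (if a then [false :: s'] else nil) ++ map (cons a) (flips s')
  end.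

Definition jumps (la lb d : R) (s : list bool) : list (R * list bool) :=
  (la, shift true s) :: (lb, shift false s) :: map (fun t => (d, t)) (flips s).

(* (p Q)(s): adjoint generator (Kolmogorov forward equation right-hand side)
   of the Markov chain on the first n sites *)
Definition Lstar (la lb d : R) (n : nat) (p : list bool -> R) (s : list bool) : R :=
  sumL (fun s' => sumL (fun rt => if list_eq_dec Bool.bool_dec (snd rt) s
                                  then fst rt * p s' else 0)
                       (jumps la lb d s')) (states n)
  - sumL (fun rt => fst rt) (jumps la lb d s) * p s.

Definition prob_vec (n : nat) (p : list bool -> R) : Prop :=
  (forall s, In s (states n) -> 0 <= p s) /\ sumL p (states n) = 1.

(* consistent family of finite-dimensional marginals
   (= a probability distribution on {0,1}^{1,2,...}) *)
Definition consistent_family (mu : nat -> list bool -> R) : Prop :=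
  (forall n, prob_vec n (mu n)) /\
  (forall n s, In s (states n) ->
     mu n s = mu (S n) (s ++ [true]) + mu (S n) (s ++ [false])).

(* P(A_i = 1) computed from the marginal on the first i sites (i >= 1) *)
Definition prob_fast (p : nat -> list bool -> R) (i : nat) : R :=
  sumL (fun s => if nth (pred i) s false then p i s else 0) (states i).

(* P(A_i = 1, A_{i+1} = 1) from the marginal on the first i+1 sites *)
Definition prob_fast2 (p : nat -> list bool -> R) (i : nat) : R :=
  sumL (fun s => if andb (nth (pred i) s false) (nth i s false)
                 then p (S i) s else 0) (states (S i)).

From Stdlib Require Import Reals Lra Lia List.
Import ListNotations.
Open Scope R_scope.

(* The generator maps the indicators of [A_(k+1) = 1] and of [A_(k+1) = A_(k+2) = 1] to a
   lower-triangular system: such a site was either pushed in from position [k] (total rate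
   [la + lb]; at [k = 0] a fast vehicle arrives at rate [la]) or has decayed (rate [d], resp.
   [2 d] for a pair).  So the corresponding moments solve linear ODEs
   [y_(k+1)' = r y_k - K y_(k+1)] and, by induction on [k], converge to [A (r/K)^k] from any
   initial law.  A stationary law exists because the balance equations on [m + 1] sites, given
   the marginal on [m] sites, are triangular in the number of slow sites; started from it the
   moments are constant, hence equal to their limits. *)

(** * Finite sums and states *)

Lemma sumL_nil {A} (f : A -> R) : sumL f [] = 0.
Proof. reflexivity. Qed.

Lemma sumL_cons {A} (f : A -> R) x l : sumL f (x :: l) = f x + sumL f l.
Proof. reflexivity. Qed.

Lemma sumL_app {A} (f : A -> R) l1 l2 : sumL f (l1 ++ l2) = sumL f l1 + sumL f l2.
Proof.
  induction l1 as [|x l1 IH]; cbn [app]; [rewrite sumL_nil; ring|].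
  rewrite !sumL_cons, IH; ring.
Qed.

Lemma sumL_map {A B} (f : B -> R) (h : A -> B) l :
  sumL f (map h l) = sumL (fun x => f (h x)) l.
Proof. induction l as [|x l IH]; [reflexivity|]. cbn [map]. now rewrite !sumL_cons, IH. Qed.

Lemma sumL_ext {A} (f g : A -> R) l : (forall x, In x l -> f x = g x) -> sumL f l = sumL g l.
Proof.
  induction l as [|x l IH]; intros E; [reflexivity|].
  rewrite !sumL_cons, E, IH; auto with datatypes.
Qed.

Lemma sumL_add {A} (f g : A -> R) l : sumL (fun x => f x + g x) l = sumL f l + sumL g l.
Proof. induction l as [|x l IH]; [cbn; ring|]. rewrite !sumL_cons, IH; ring. Qed.

Lemma sumL_sub {A} (f g : A -> R) l : sumL (fun x => f x - g x) l = sumL f l - sumL g l.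
Proof. induction l as [|x l IH]; [cbn; ring|]. rewrite !sumL_cons, IH; ring. Qed.

Lemma sumL_scal {A} c (f : A -> R) l : sumL (fun x => c * f x) l = c * sumL f l.
Proof. induction l as [|x l IH]; [cbn; ring|]. rewrite !sumL_cons, IH; ring. Qed.

Lemma sumL_0 {A} (l : list A) : sumL (fun _ => 0) l = 0.
Proof. induction l as [|x l IH]; [reflexivity|]. rewrite sumL_cons, IH; ring. Qed.

Lemma sumL_swap {A B} (F : A -> B -> R) l m :
  sumL (fun x => sumL (F x) m) l = sumL (fun y => sumL (fun x => F x y) l) m.
Proof.
  induction l as [|x l IH]; [symmetry; apply sumL_0|].
  rewrite sumL_cons, IH, <- sumL_add. reflexivity.
Qed.

Lemma sumL_nonneg {A} (f : A -> R) l : (forall x, In x l -> 0 <= f x) -> 0 <= sumL f l.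
Proof.
  induction l as [|x l IH]; intros H; [cbn; lra|]. rewrite sumL_cons.
  assert (0 <= f x) by auto with datatypes.
  assert (0 <= sumL f l) by auto with datatypes. lra.
Qed.

Lemma In_states n s : In s (states n) <-> length s = n.
Proof.
  revert s; induction n as [|n IH]; intros s; cbn.
  - split; [now intros [<-|[]]|]. destruct s; [auto|discriminate].
  - rewrite in_app_iff, !in_map_iff. split.
    + intros [[r [<- Hr]]|[r [<- Hr]]]; cbn; f_equal; now apply IH.
    + destruct s as [|b r]; [discriminate|]. intros [= Hr%IH].
      destruct b; [left|right]; exists r; auto.
Qed.

Lemma sumL_states_S n (f : list bool -> R) :
  sumL f (states (S n)) =
  sumL (fun r => f (true :: r)) (states n) + sumL (fun r => f (false :: r)) (states n).
Proof. cbn [states]. now rewrite sumL_app, !sumL_map. Qed.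

Lemma sumL_states_snoc n (f : list bool -> R) :
  sumL f (states (S n)) = sumL (fun u => f (u ++ [true]) + f (u ++ [false])) (states n).
Proof.
  revert f; induction n as [|n IH]; intros f; [cbn; ring|].
  rewrite sumL_states_S, (IH (fun r => f (true :: r))), (IH (fun r => f (false :: r))).
  now rewrite sumL_states_S.
Qed.

Notation list_eqb := (list_eq_dec Bool.bool_dec).

Lemma list_eqb_cons {X : Type} a b u v (x y : X) :
  (if list_eqb (a :: u) (b :: v) then x else y) =
  (if Bool.eqb a b then (if list_eqb u v then x else y) else y).
Proof.
  destruct (list_eqb (a :: u) (b :: v)) as [[= -> ->]|E].
  - rewrite Bool.eqb_reflx. now destruct list_eqb.
  - destruct (Bool.eqb a b) eqn:Eab; [|reflexivity].
    apply Bool.eqb_prop in Eab as ->. destruct list_eqb; congruence.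
Qed.

Lemma list_eqb_sym {X : Type} u v (x y : X) :
  (if list_eqb u v then x else y) = (if list_eqb v u then x else y).
Proof. destruct (list_eqb u v), (list_eqb v u); congruence. Qed.

Lemma sumL_states_pick n u (g : list bool -> R) : length u = n ->
  sumL (fun s => if list_eqb s u then g s else 0) (states n) = g u.
Proof.
  revert u g; induction n as [|n IH]; intros u g Hu.
  - destruct u; [cbn; ring|discriminate].
  - destruct u as [|a u]; [discriminate|]. injection Hu as Hu.
    rewrite sumL_states_S.
    rewrite (sumL_ext (fun r => if list_eqb (true :: r) (a :: u) then g (true :: r) else 0)
               (fun r => if Bool.eqb true a then
                           (if list_eqb r u then g (true :: r) else 0) else 0))
      by (intros; apply list_eqb_cons).
    rewrite (sumL_ext (fun r => if list_eqb (false :: r) (a :: u) then g (false :: r) else 0)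
               (fun r => if Bool.eqb false a then
                           (if list_eqb r u then g (false :: r) else 0) else 0))
      by (intros; apply list_eqb_cons).
    destruct a; cbn [Bool.eqb].
    + rewrite (IH u (fun r => g (true :: r))), sumL_0 by exact Hu. ring.
    + rewrite (IH u (fun r => g (false :: r))), sumL_0 by exact Hu. ring.
Qed.

(** * The generator *)

Lemma shift_length b s : length (shift b s) = length s.
Proof. unfold shift. rewrite length_firstn. cbn. lia. Qed.

Lemma flips_length s t : In t (flips s) -> length t = length s.
Proof.
  revert t; induction s as [|a s IH]; cbn; intros t H; [contradiction|].
  apply in_app_iff in H as [H|H].
  - destruct a; cbn in H; [|contradiction]. now destruct H as [<-|[]].
  - apply in_map_iff in H as [r [<- Hr]]. cbn. f_equal. auto.
Qed.

Lemma jumps_length la lb d s rt : In rt (jumps la lb d s) -> length (snd rt) = length s.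
Proof.
  cbn. intros [<-|[<-|H]]; try apply shift_length.
  apply in_map_iff in H as [t [<- Ht]]. now apply flips_length.
Qed.

Definition gen (la lb d : R) (c : list bool -> R) (s : list bool) : R :=
  sumL (fun rt => fst rt * (c (snd rt) - c s)) (jumps la lb d s).

Lemma sumL_Lstar la lb d n (c p : list bool -> R) :
  sumL (fun s => c s * Lstar la lb d n p s) (states n) =
  sumL (fun s => p s * gen la lb d c s) (states n).
Proof.
  set (inflow := fun s' s => sumL (fun rt => if list_eqb (snd rt) s then fst rt * p s' else 0)
                                  (jumps la lb d s')).
  assert (Hinflow : sumL (fun s => c s * sumL (fun s' => inflow s' s) (states n)) (states n) =
           sumL (fun s' => p s' * sumL (fun rt => fst rt * c (snd rt)) (jumps la lb d s'))
             (states n)).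
  { transitivity (sumL (fun s' => sumL (fun rt => sumL (fun s =>
        if list_eqb s (snd rt) then c s * (fst rt * p s') else 0) (states n))
        (jumps la lb d s')) (states n)).
    - rewrite (sumL_ext _ (fun s => sumL (fun s' => c s * inflow s' s) (states n)))
        by (intros; symmetry; apply sumL_scal).
      rewrite sumL_swap. apply sumL_ext. intros s' _.
      rewrite (sumL_ext _ (fun s => sumL (fun rt => c s * (if list_eqb (snd rt) s
                  then fst rt * p s' else 0)) (jumps la lb d s')))
        by (intros; unfold inflow; now rewrite sumL_scal).
      rewrite sumL_swap. apply sumL_ext. intros rt _. apply sumL_ext. intros s _.
      rewrite list_eqb_sym. destruct list_eqb; ring.
    - apply sumL_ext. intros s' Hs'. rewrite <- sumL_scal. apply sumL_ext. intros rt Hrt.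
      rewrite sumL_states_pick; [ring|].
      rewrite (jumps_length _ _ _ _ _ Hrt). now apply In_states. }
  unfold Lstar, gen.
  rewrite (sumL_ext _ (fun s => c s * sumL (fun s' => inflow s' s) (states n) -
             p s * (sumL (fun rt => fst rt) (jumps la lb d s) * c s)))
    by (intros; unfold inflow; ring).
  rewrite sumL_sub, Hinflow, <- sumL_sub. apply sumL_ext. intros s _.
  rewrite (sumL_ext (fun rt => fst rt * (c (snd rt) - c s))
             (fun rt => fst rt * c (snd rt) - c s * fst rt)) by (intros; ring).
  rewrite sumL_sub, (sumL_scal (c s) (fun rt => fst rt)). ring.
Qed.

Lemma gen_jumps la lb d c s :
  gen la lb d c s = la * (c (shift true s) - c s) + lb * (c (shift false s) - c s)
                    + d * sumL (fun t => c t - c s) (flips s).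
Proof.
  unfold gen, jumps. rewrite !sumL_cons, sumL_map, <- sumL_scal. cbn [fst snd]. ring.
Qed.

Lemma gen_const la lb d c0 s : gen la lb d (fun _ => c0) s = 0.
Proof. rewrite gen_jumps, (sumL_ext _ (fun _ => 0)) by (intros; ring). rewrite sumL_0. ring. Qed.

Definition fast (k : nat) (s : list bool) : R := if nth k s false then 1 else 0.

Definition fast_pair (k : nat) (s : list bool) : R :=
  if andb (nth k s false) (nth (S k) s false) then 1 else 0.

Lemma sumL_flips_fast k s : sumL (fun t => fast k t - fast k s) (flips s) = - fast k s.
Proof.
  revert k; induction s as [|a s IH]; intros k.
  { destruct k; cbn [flips]; rewrite sumL_nil; unfold fast; cbn; ring. }
  cbn [flips]. rewrite sumL_app, sumL_map. destruct k as [|k].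
  - rewrite (sumL_ext (fun x => fast 0 (a :: x) - fast 0 (a :: s)) (fun _ => 0))
      by (intros; unfold fast; cbn; ring).
    rewrite sumL_0. destruct a; unfold fast; cbn; ring.
  - rewrite (sumL_ext (fun x => fast (S k) (a :: x) - fast (S k) (a :: s))
                      (fun t => fast k t - fast k s)) by (intros; reflexivity).
    rewrite IH. destruct a; unfold fast; cbn; ring.
Qed.

Lemma sumL_flips_fast_pair k s :
  sumL (fun t => fast_pair k t - fast_pair k s) (flips s) = - 2 * fast_pair k s.
Proof.
  revert k; induction s as [|a s IH]; intros k.
  { destruct k; cbn [flips]; rewrite sumL_nil; unfold fast_pair; cbn; ring. }
  cbn [flips]. rewrite sumL_app, sumL_map. destruct k as [|k].
  - rewrite (sumL_ext (fun x => fast_pair 0 (a :: x) - fast_pair 0 (a :: s))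
                      (fun t => (if a then 1 else 0) * (fast 0 t - fast 0 s)))
      by (intros; unfold fast_pair, fast; destruct a; cbn; ring).
    rewrite sumL_scal, sumL_flips_fast. destruct a; unfold fast_pair, fast; cbn; ring.
  - rewrite (sumL_ext (fun x => fast_pair (S k) (a :: x) - fast_pair (S k) (a :: s))
                      (fun t => fast_pair k t - fast_pair k s)) by (intros; reflexivity).
    rewrite IH. destruct a; unfold fast_pair; cbn; ring.
Qed.

Lemma shift_cons b x r : shift b (x :: r) = b :: firstn (length r) (x :: r).
Proof. reflexivity. Qed.

Lemma nth_firstn_lt (s : list bool) n k : (k < n)%nat -> nth k (firstn n s) false = nth k s false.
Proof. intros Hk. rewrite nth_firstn. destruct (Nat.ltb_spec k n); [reflexivity|lia]. Qed.

Lemma gen_fast_0 la lb d s : (1 <= length s)%nat ->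
  gen la lb d (fast 0) s = la - (la + lb + d) * fast 0 s.
Proof.
  destruct s as [|x r]; cbn [length]; [lia|]. intros _.
  rewrite gen_jumps, sumL_flips_fast, !shift_cons. unfold fast; cbn. ring.
Qed.

Lemma gen_fast_S la lb d k s : (S k < length s)%nat ->
  gen la lb d (fast (S k)) s = (la + lb) * fast k s - (la + lb + d) * fast (S k) s.
Proof.
  destruct s as [|x r]; cbn [length]; [lia|]. intros Hk.
  rewrite gen_jumps, sumL_flips_fast, !shift_cons.
  unfold fast at 1 3. cbn [nth]. rewrite nth_firstn_lt by lia. fold (fast k (x :: r)). ring.
Qed.

Lemma gen_fast_pair_0 la lb d s : (2 <= length s)%nat ->
  gen la lb d (fast_pair 0) s = la * fast 0 s - (la + lb + 2 * d) * fast_pair 0 s.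
Proof.
  destruct s as [|x [|y r]]; cbn [length]; try lia. intros _.
  rewrite gen_jumps, sumL_flips_fast_pair, !shift_cons.
  unfold fast_pair, fast; cbn. destruct x, y; cbn; ring.
Qed.

Lemma gen_fast_pair_S la lb d k s : (S (S k) < length s)%nat ->
  gen la lb d (fast_pair (S k)) s =
  (la + lb) * fast_pair k s - (la + lb + 2 * d) * fast_pair (S k) s.
Proof.
  destruct s as [|x r]; cbn [length]; [lia|]. intros Hk.
  rewrite gen_jumps, sumL_flips_fast_pair, !shift_cons.
  unfold fast_pair at 1 3. cbn [nth]. rewrite !nth_firstn_lt by lia.
  fold (fast_pair k (x :: r)). ring.
Qed.

(** * Linear ODEs and the transient moments *)

Definition limit_at_infty (f : R -> R) (L : R) : Prop :=
  forall eps, eps > 0 -> exists T, forall t, t >= T -> Rabs (f t - L) < eps.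

Lemma limit_at_infty_ext f g L :
  (forall t, f t = g t) -> limit_at_infty f L -> limit_at_infty g L.
Proof.
  intros E H eps Heps. destruct (H eps Heps) as [T HT].
  exists T. intros t Ht. rewrite <- E. auto.
Qed.

Lemma limit_at_infty_scal c f L :
  limit_at_infty f L -> limit_at_infty (fun t => c * f t) (c * L).
Proof.
  intros H eps Heps. destruct (Req_dec c 0) as [->|Hc].
  - exists 0. intros t _. rewrite Rmult_0_l, Rmult_0_l, Rminus_0_r, Rabs_R0. lra.
  - assert (Hc' : 0 < Rabs c) by now apply Rabs_pos_lt.
    destruct (H (eps / Rabs c)) as [T HT]; [apply Rlt_gt, Rdiv_lt_0_compat; lra|].
    exists T. intros t Ht. specialize (HT t Ht).
    replace (c * f t - c * L) with (c * (f t - L)) by ring. rewrite Rabs_mult.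
    apply Rmult_lt_compat_l with (r := Rabs c) in HT; [|exact Hc'].
    replace (Rabs c * (eps / Rabs c)) with eps in HT by (field; lra). exact HT.
Qed.

Lemma limit_at_infty_const c L : limit_at_infty (fun _ => c) L -> c = L.
Proof.
  intros H. destruct (Req_dec c L) as [|Hne]; [assumption|exfalso].
  assert (Hpos : Rabs (c - L) > 0) by (apply Rabs_pos_lt; lra).
  destruct (H _ Hpos) as [T HT]. specialize (HT T (Rge_refl T)). lra.
Qed.

Lemma deriv_zero_const f : (forall t, derivable_pt_lim f t 0) -> forall a b, f a = f b.
Proof.
  intros Hf a b.
  assert (Hmvt : forall x y, x < y -> f x = f y).
  { intros x y Hxy. destruct (MVT_cor2 f (fun _ => 0) x y Hxy) as [c [Hc _]].
    - intros; apply Hf.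
    - lra. }
  destruct (Rtotal_order a b) as [H|[->|H]]; [auto|reflexivity|symmetry; auto].
Qed.

Lemma deriv_nonpos_le f f' T :
  (forall t, derivable_pt_lim f t (f' t)) -> (forall t, T <= t -> f' t <= 0) ->
  forall t, T <= t -> f t <= f T.
Proof.
  intros Hf Hneg t Ht. destruct (Req_dec t T) as [->|Hne]; [lra|].
  destruct (MVT_cor2 f f' T t) as [c [Hc Hct]]; [lra|intros; apply Hf|].
  assert (f' c <= 0) by (apply Hneg; lra).
  assert (f' c * (t - T) <= 0) by nra. lra.
Qed.

Lemma derivable_pt_lim_exp_scal K t :
  derivable_pt_lim (fun u => exp (K * u)) t (K * exp (K * t)).
Proof.
  replace (K * exp (K * t)) with (exp (K * t) * (K * 1)) by ring.
  apply (derivable_pt_lim_comp (fun u => K * u) exp).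
  - apply (derivable_pt_lim_scal id), derivable_pt_lim_id.
  - apply derivable_pt_lim_exp.
Qed.

(* Gronwall-type comparison: [exp (K u) * (y u - B / K)] is nonincreasing from [T] on. *)
Lemma linear_ode_upper_bound (y a : R -> R) K B T : 0 < K ->
  (forall t, derivable_pt_lim y t (a t - K * y t)) -> (forall t, T <= t -> a t <= B) ->
  forall t, T <= t -> y t - B / K <= exp (- K * (t - T)) * (y T - B / K).
Proof.
  intros HK Hy HaB t Ht.
  assert (Hmono := deriv_nonpos_le (fun u => exp (K * u) * (y u - B / K))
                     (fun u => exp (K * u) * (a u - B)) T).
  assert (Hle : exp (K * t) * (y t - B / K) <= exp (K * T) * (y T - B / K)).
  { apply Hmono; [|intros u Hu; pose proof (exp_pos (K * u)); specialize (HaB u Hu); nra|exact Ht].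
    intros u. replace (exp (K * u) * (a u - B))
      with (K * exp (K * u) * (y u - B / K) + exp (K * u) * (a u - K * y u)) by (field; lra).
    apply (derivable_pt_lim_mult (fun u => exp (K * u)) (fun u => y u - B / K)).
    - apply derivable_pt_lim_exp_scal.
    - replace (a u - K * y u) with (a u - K * y u - 0) by ring.
      apply (derivable_pt_lim_minus y (fun _ => B / K)); [apply Hy|apply derivable_pt_lim_const]. }
  assert (HexpT : exp (- K * (t - T)) = exp (- K * t) * exp (K * T))
    by (rewrite <- exp_plus; f_equal; ring).
  assert (Hexpt : exp (- K * t) * exp (K * t) = 1)
    by (rewrite <- exp_plus, <- exp_0; f_equal; ring).
  apply (Rmult_le_compat_l (exp (- K * t))) in Hle; [|apply Rlt_le, exp_pos].
  rewrite HexpT. rewrite <- Rmult_assoc, Hexpt in Hle. lra.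
Qed.

Lemma linear_ode_lower_bound (y a : R -> R) K B T : 0 < K ->
  (forall t, derivable_pt_lim y t (a t - K * y t)) -> (forall t, T <= t -> B <= a t) ->
  forall t, T <= t -> exp (- K * (t - T)) * (y T - B / K) <= y t - B / K.
Proof.
  intros HK Hy HaB t Ht.
  assert (Hneg := linear_ode_upper_bound (fun u => - y u) (fun u => - a u) K (- B) T HK).
  replace (- B / K) with (- (B / K)) in Hneg by (field; lra).
  enough (exp (- K * (t - T)) * (- y T - - (B / K)) >= - y t - - (B / K)) by lra.
  apply Rle_ge, Hneg; [|intros u Hu; specialize (HaB u Hu); lra|exact Ht].
  intros u. replace (- a u - K * - y u) with (- (a u - K * y u)) by ring.
  apply (derivable_pt_lim_opp y), Hy.
Qed.

Lemma exp_decay K C eps : 0 < K -> 0 <= C -> 0 < eps ->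
  exists S, 0 <= S /\ forall s, S <= s -> exp (- K * s) * C < eps.
Proof.
  intros HK HC Heps. exists (C / (K * eps)).
  split; [apply Rle_mult_inv_pos; nra|]. intros s Hs.
  assert (HKs : C <= eps * (K * s)).
  { apply (Rmult_le_compat_l (K * eps)) in Hs; [|nra].
    replace (K * eps * (C / (K * eps))) with C in Hs by (field; lra). lra. }
  assert (HCexp : C < eps * exp (K * s)) by (pose proof (exp_ineq1_le (K * s)); nra).
  assert (Hinv : exp (- K * s) * exp (K * s) = 1)
    by (rewrite <- exp_plus, <- exp_0; f_equal; ring).
  apply (Rmult_lt_compat_l (exp (- K * s))) in HCexp; [|apply exp_pos].
  assert (Hr : exp (- K * s) * (eps * exp (K * s)) = eps * (exp (- K * s) * exp (K * s)))
    by ring.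
  rewrite Hinv, Rmult_1_r in Hr. lra.
Qed.

Lemma limit_linear_ode (y a : R -> R) K A : 0 < K ->
  (forall t, derivable_pt_lim y t (a t - K * y t)) -> limit_at_infty a A ->
  limit_at_infty y (A / K).
Proof.
  intros HK Hy Ha eps Heps.
  destruct (Ha (K * eps / 2)) as [T HT]; [apply Rlt_gt; nra|].
  assert (Hclose : forall t, T <= t -> A - K * eps / 2 <= a t <= A + K * eps / 2).
  { intros t Ht. specialize (HT t ltac:(lra)). apply Rabs_def2 in HT. lra. }
  destruct (exp_decay K (Rabs (y T - A / K)) (eps / 2)) as [S [HS0 HS]];
    [exact HK|apply Rabs_pos|lra|].
  exists (T + S). intros t Ht. specialize (HS (t - T) ltac:(lra)).
  assert (Hup := linear_ode_upper_bound y a K (A + K * eps / 2) T HK Hy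
                   ltac:(intros u Hu; apply Hclose, Hu) t ltac:(lra)).
  assert (Hlow := linear_ode_lower_bound y a K (A - K * eps / 2) T HK Hy
                    ltac:(intros u Hu; apply Hclose, Hu) t ltac:(lra)).
  replace ((A + K * eps / 2) / K) with (A / K + eps / 2) in Hup by (field; lra).
  replace ((A - K * eps / 2) / K) with (A / K - eps / 2) in Hlow by (field; lra).
  pose proof (Rle_abs (y T - A / K)). pose proof (Rle_abs (- (y T - A / K))).
  rewrite Rabs_Ropp in *. pose proof (exp_pos (- K * (t - T))).
  apply Rabs_def1; nra.
Qed.

Lemma limit_linear_cascade (y : nat -> R -> R) r K A N : 0 < K ->
  limit_at_infty (y O) A ->
  (forall k t, (k < N)%nat -> derivable_pt_lim (y (S k)) t (r * y k t - K * y (S k) t)) ->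
  forall k, (k <= N)%nat -> limit_at_infty (y k) (A * (r / K) ^ k).
Proof.
  intros HK H0 Hd k. induction k as [|k IH]; intros Hk.
  - now rewrite pow_O, Rmult_1_r.
  - replace (A * (r / K) ^ S k) with (r * (A * (r / K) ^ k) / K) by (cbn [pow]; field; lra).
    apply (limit_linear_ode (y (S k)) (fun t => r * y k t)); [exact HK| |].
    + intros t. apply Hd. lia.
    + apply limit_at_infty_scal, IH. lia.
Qed.

Definition moment (n : nat) (c q : list bool -> R) : R := sumL (fun s => c s * q s) (states n).

Lemma moment_scal n a c q : moment n (fun s => a * c s) q = a * moment n c q.
Proof. unfold moment. rewrite <- sumL_scal. apply sumL_ext. intros; ring. Qed.

Lemma prob_fast_moment p i : prob_fast p i = moment i (fast (pred i)) (p i).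
Proof. unfold prob_fast, moment, fast. apply sumL_ext. intros s _. destruct nth; ring. Qed.

Lemma prob_fast2_moment p i : (1 <= i)%nat ->
  prob_fast2 p i = moment (S i) (fast_pair (pred i)) (p (S i)).
Proof.
  intros Hi. unfold prob_fast2, moment, fast_pair. replace (S (pred i)) with i by lia.
  apply sumL_ext. intros s _. destruct andb; ring.
Qed.

Section Transient.

Variables (la lb d : R) (mu : nat -> list bool -> R) (p : R -> nat -> list bool -> R).
Hypotheses (hla : 0 < la) (hlb : 0 < lb) (hd : 0 < d).
Hypothesis mu_consistent : consistent_family mu.
Hypothesis p_init : forall n s, p 0 n s = mu n s.
Hypothesis p_forward : forall n s t, In s (states n) ->
  derivable_pt_lim (fun u => p u n s) t (Lstar la lb d n (p t n) s).

Lemma moment_deriv n c t :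
  derivable_pt_lim (fun u => moment n c (p u n)) t
    (sumL (fun s => p t n s * gen la lb d c s) (states n)).
Proof.
  rewrite <- sumL_Lstar. unfold moment.
  enough (Hl : forall l, incl l (states n) ->
            derivable_pt_lim (fun u => sumL (fun s => c s * p u n s) l) t
              (sumL (fun s => c s * Lstar la lb d n (p t n) s) l)) by apply Hl, incl_refl.
  induction l as [|s l IH]; intros Hl.
  - apply derivable_pt_lim_const.
  - apply incl_cons_inv in Hl as [Hs Hl].
    apply (derivable_pt_lim_plus (fun u => c s * p u n s)); [|auto].
    apply (derivable_pt_lim_scal (fun u => p u n s)), p_forward, Hs.
Qed.

Lemma moment_deriv_linear n c c' r K :
  (forall s, length s = n -> gen la lb d c s = r * c' s - K * c s) ->
  forall t, derivable_pt_lim (fun u => moment n c (p u n)) t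
              (r * moment n c' (p t n) - K * moment n c (p t n)).
Proof.
  intros Hgen t.
  replace (r * moment n c' (p t n) - K * moment n c (p t n))
    with (sumL (fun s => p t n s * gen la lb d c s) (states n)); [apply moment_deriv|].
  unfold moment. rewrite <- !sumL_scal, <- sumL_sub. apply sumL_ext.
  intros s Hs%In_states. rewrite Hgen by exact Hs. ring.
Qed.

Lemma limit_moment_const n c0 : limit_at_infty (fun t => moment n (fun _ => c0) (p t n)) c0.
Proof.
  assert (Hconst : forall t, moment n (fun _ => c0) (p t n) = moment n (fun _ => c0) (p 0 n)).
  { intros t. apply (deriv_zero_const (fun u => moment n (fun _ => c0) (p u n))). clear t. intros t.
    replace 0 with (sumL (fun s => p t n s * gen la lb d (fun _ => c0) s) (states n));
      [apply moment_deriv|].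
    rewrite (sumL_ext _ (fun _ => 0)) by (intros; rewrite gen_const; ring). apply sumL_0. }
  assert (Hinit : moment n (fun _ => c0) (p 0 n) = c0).
  { destruct mu_consistent as [Hprob _]. destruct (Hprob n) as [_ Hmass].
    unfold moment. rewrite sumL_scal, (sumL_ext _ (mu n)) by (intros; apply p_init).
    rewrite Hmass. ring. }
  intros eps Heps. exists 0. intros t _. rewrite Hconst, Hinit, Rminus_diag, Rabs_R0. lra.
Qed.

Lemma limit_moment_fast n k : (k < n)%nat ->
  limit_at_infty (fun t => moment n (fast k) (p t n))
    (la / (la + lb) * ((la + lb) / (la + lb + d)) ^ S k).
Proof.
  intros Hk.
  set (y j t := match j with
                | O => moment n (fun _ => la / (la + lb)) (p t n)
                | S j => moment n (fast j) (p t n)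
                end).
  change (limit_at_infty (y (S k)) (la / (la + lb) * ((la + lb) / (la + lb + d)) ^ S k)).
  apply (limit_linear_cascade y (la + lb) (la + lb + d) _ n); [lra|apply limit_moment_const| |lia].
  intros [|j] t Hj; apply moment_deriv_linear; intros s Hs.
  - rewrite gen_fast_0 by lia. field. lra.
  - apply gen_fast_S. lia.
Qed.

(* The pair cascade is driven by [la * fast 0], written as [(la + lb) * (la / (la + lb) * fast 0)]
   so that all its levels share the rate [la + lb]. *)
Lemma limit_moment_fast_pair n k : (S k < n)%nat ->
  limit_at_infty (fun t => moment n (fast_pair k) (p t n))
    (la ^ 2 / ((la + lb) * (la + lb + d)) * ((la + lb) / (la + lb + 2 * d)) ^ S k).
Proof.
  intros Hk.
  set (y j t := match j with
                | O => moment n (fun s => la / (la + lb) * fast 0 s) (p t n)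
                | S j => moment n (fast_pair j) (p t n)
                end).
  change (limit_at_infty (y (S k))
            (la ^ 2 / ((la + lb) * (la + lb + d)) * ((la + lb) / (la + lb + 2 * d)) ^ S k)).
  apply (limit_linear_cascade y (la + lb) (la + lb + 2 * d) _ (pred n)); [lra| | |lia].
  - replace (la ^ 2 / ((la + lb) * (la + lb + d)))
      with (la / (la + lb) * (la / (la + lb) * ((la + lb) / (la + lb + d)) ^ 1))
      by (field; lra).
    apply (limit_at_infty_ext (fun t => la / (la + lb) * moment n (fast 0) (p t n))).
    + intros t. symmetry. apply moment_scal.
    + apply limit_at_infty_scal, limit_moment_fast. lia.
  - intros [|j] t Hj; apply moment_deriv_linear; intros s Hs.
    + rewrite gen_fast_pair_0 by lia. field. lra.
    + apply gen_fast_pair_S. lia.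
Qed.

End Transient.

(** * The stationary law *)

Fixpoint upflips (s : list bool) : list (list bool) :=
  match s with
  | nil => nil
  | a :: s' => (if a then nil else [true :: s']) ++ map (cons a) (upflips s')
  end.

Lemma upflips_spec s v : In v (upflips s) ->
  length v = length s /\ S (count_occ Bool.bool_dec v false) = count_occ Bool.bool_dec s false.
Proof.
  revert v; induction s as [|a s IH]; cbn; intros v H; [contradiction|].
  apply in_app_iff in H as [H|H].
  - destruct a; cbn in H; [contradiction|]. destruct H as [<-|[]]. cbn. auto.
  - apply in_map_iff in H as [w [<- Hw]]. apply IH in Hw as [Hl Hc].
    cbn. split; [lia|]. destruct a; cbn; lia.
Qed.

Lemma length_flips s : length (flips s) = count_occ Bool.bool_dec s true.
Proof.
  induction s as [|a s IH]; [reflexivity|]. cbn [flips].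
  rewrite length_app, length_map, IH. destruct a; cbn; lia.
Qed.

Lemma sumL_upflips_snoc (f : list bool -> R) u x :
  sumL f (upflips (u ++ [x])) =
  sumL (fun v => f (v ++ [x])) (upflips u) + (if x then 0 else f (u ++ [true])).
Proof.
  revert f; induction u as [|a u IH]; intros f.
  - destruct x; cbn; ring.
  - cbn [app upflips]. rewrite !sumL_app, !sumL_map, (IH (fun v => f (a :: v))).
    destruct a; cbn; ring.
Qed.

Lemma sumL_flips_inflow_cons (x : R) a u b r :
  sumL (fun t => if list_eqb t (a :: u) then x else 0) (flips (b :: r)) =
  (if andb b (negb a) then (if list_eqb r u then x else 0) else 0) +
  (if Bool.eqb b a then sumL (fun t => if list_eqb t u then x else 0) (flips r) else 0).
Proof.
  cbn [flips]. rewrite sumL_app, sumL_map.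
  rewrite (sumL_ext (fun t => if list_eqb (b :: t) (a :: u) then x else 0)
             (fun t => if Bool.eqb b a then (if list_eqb t u then x else 0) else 0))
    by (intros; apply list_eqb_cons).
  destruct a, b; cbn; rewrite ?list_eqb_cons, ?sumL_0; cbn; ring.
Qed.

Lemma sumL_flips_inflow m (q : list bool -> R) s : length s = m ->
  sumL (fun s' => sumL (fun t => if list_eqb t s then q s' else 0) (flips s')) (states m) =
  sumL q (upflips s).
Proof.
  revert q s; induction m as [|m IH]; intros q s Hs.
  - destruct s; [cbn; ring|discriminate].
  - destruct s as [|a u]; [discriminate|]. injection Hs as Hu.
    rewrite sumL_states_S, !(sumL_ext _ _ _ (fun r _ => sumL_flips_inflow_cons _ a u _ r)).
    destruct a; cbn [andb negb Bool.eqb upflips app]; rewrite !sumL_add, !sumL_0.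
    + rewrite (IH (fun r => q (true :: r)) u Hu), sumL_map. ring.
    + rewrite (IH (fun r => q (false :: r)) u Hu), sumL_states_pick, sumL_cons, sumL_map
        by exact Hu. ring.
Qed.

Lemma shift_snoc b (w : list bool) x : shift b (w ++ [x]) = b :: w.
Proof.
  unfold shift. rewrite length_app, Nat.add_1_r. cbn [firstn].
  now rewrite firstn_app, Nat.sub_diag, firstn_all, app_nil_r.
Qed.

Lemma sumL_shift_inflow m b (r : R) (q : list bool -> R) a u : length u = m ->
  sumL (fun s' => if list_eqb (shift b s') (a :: u) then r * q s' else 0) (states (S m)) =
  if Bool.eqb b a then r * (q (u ++ [true]) + q (u ++ [false])) else 0.
Proof.
  intros Hu. rewrite sumL_states_snoc.
  rewrite (sumL_ext _ (fun w => if Bool.eqb b a then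
      (if list_eqb w u then r * (q (w ++ [true]) + q (w ++ [false])) else 0) else 0)).
  - destruct (Bool.eqb b a); [now apply sumL_states_pick|apply sumL_0].
  - intros w _. rewrite !shift_snoc, !list_eqb_cons.
    destruct (Bool.eqb b a), (list_eqb w u); ring.
Qed.

Lemma sumL_fst_const (c : R) (l : list (list bool)) :
  sumL (fun rt : R * list bool => fst rt) (map (fun t => (c, t)) l) = c * INR (length l).
Proof.
  induction l as [|t l IH]; [cbn; ring|].
  cbn [map length]. rewrite sumL_cons, IH, S_INR. cbn [fst]. ring.
Qed.

Lemma Lstar_cons la lb d m q a u : length u = m ->
  Lstar la lb d (S m) q (a :: u) =
  (if a then la else lb) * (q (u ++ [true]) + q (u ++ [false])) + d * sumL q (upflips (a :: u))
  - (la + lb + d * INR (count_occ Bool.bool_dec (a :: u) true)) * q (a :: u).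
Proof.
  intros Hu. unfold Lstar.
  rewrite (sumL_ext _ (fun s' =>
     (if list_eqb (shift true s') (a :: u) then la * q s' else 0) +
     ((if list_eqb (shift false s') (a :: u) then lb * q s' else 0) +
      sumL (fun t => if list_eqb t (a :: u) then d * q s' else 0) (flips s'))))
    by (intros; unfold jumps; now rewrite !sumL_cons, sumL_map).
  rewrite !sumL_add, (sumL_shift_inflow m true), (sumL_shift_inflow m false) by exact Hu.
  rewrite (sumL_flips_inflow (S m) (fun s' => d * q s')) by (cbn; auto).
  unfold jumps. rewrite sumL_scal, !sumL_cons, sumL_fst_const, length_flips. cbn [fst].
  destruct a; cbn [Bool.eqb]; ring.
Qed.

Section Stationary.

Variables la lb d : R.
Hypotheses (la_pos : 0 < la) (lb_pos : 0 < lb) (d_pos : 0 < d).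

Definition exit_rate (s : list bool) : R := la + lb + d * INR (count_occ Bool.bool_dec s true).

Lemma exit_rate_pos s : 0 < exit_rate s.
Proof. unfold exit_rate. pose proof (pos_INR (count_occ Bool.bool_dec s true)). nra. Qed.

(* Given the marginal [prev] on [m] sites, the balance equations on [m + 1] sites are triangular
   in the number of slow sites, since the decay inflow comes from [upflips s], which have one slow
   site less.  [balance prev k] solves them with fuel [k], enough once [k] exceeds the number of
   slow sites of [s]. *)
Fixpoint balance (prev : list bool -> R) (k : nat) (s : list bool) : R :=
  match k with
  | O => 0
  | S k' => ((if hd false s then la else lb) * prev (tl s)
             + d * sumL (balance prev k') (upflips s)) / exit_rate s
  end.

Fixpoint stat (n : nat) : list bool -> R :=
  match n with
  | O => fun _ => 1
  | S m => balance (stat m) (S (S m))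
  end.

Definition balanced (prev q : list bool -> R) (s : list bool) : Prop :=
  exit_rate s * q s = (if hd false s then la else lb) * prev (tl s) + d * sumL q (upflips s).

Lemma balance_fuel prev k k' s :
  (count_occ Bool.bool_dec s false < k)%nat -> (count_occ Bool.bool_dec s false < k')%nat ->
  balance prev k s = balance prev k' s.
Proof.
  revert k' s; induction k as [|k IH]; intros [|k'] s Hk Hk'; try lia.
  cbn [balance]. do 3 f_equal. apply sumL_ext.
  intros v Hv%upflips_spec. apply IH; lia.
Qed.

Lemma stat_balanced m s : length s = S m -> balanced (stat m) (stat (S m)) s.
Proof.
  intros Hs. unfold balanced. pose proof (exit_rate_pos s).
  change (stat (S m)) with (balance (stat m) (S (S m))).
  rewrite (sumL_ext (balance (stat m) (S (S m))) (balance (stat m) (S m))).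
  - cbn [balance]. field. lra.
  - intros v [Hl Hc]%upflips_spec. pose proof (count_occ_bound Bool.bool_dec false s).
    apply balance_fuel; lia.
Qed.

Lemma balance_unique n prev q :
  (forall s, length s = n -> balanced prev q s) ->
  forall k s, length s = n -> (count_occ Bool.bool_dec s false < k)%nat -> q s = balance prev k s.
Proof.
  intros Hq k. induction k as [|k IH]; intros s Hs Hk; [lia|].
  cbn [balance]. pose proof (exit_rate_pos s).
  rewrite (sumL_ext (balance prev k) q).
  - apply (Rmult_eq_reg_l (exit_rate s)); [|lra]. rewrite (Hq s Hs). field. lra.
  - intros v [Hl Hc]%upflips_spec. symmetry. apply IH; lia.
Qed.

Lemma balance_nonneg prev k s : (forall s, 0 <= prev s) -> 0 <= balance prev k s.
Proof.
  intros Hprev. revert s; induction k as [|k IH]; intros s; cbn [balance]; [lra|].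
  apply Rle_mult_inv_pos; [|apply exit_rate_pos].
  assert (0 <= sumL (balance prev k) (upflips s)) by (apply sumL_nonneg; auto).
  specialize (Hprev (tl s)). destruct (hd false s); nra.
Qed.

Lemma stat_nonneg n s : 0 <= stat n s.
Proof.
  revert s; induction n as [|n IH]; intros s; cbn [stat]; [lra|].
  now apply balance_nonneg.
Qed.

(* Summing out the last site of [stat (S (S m))] gives a solution of the triangular system
   defining [stat (S m)]; uniqueness does the rest. *)
Lemma stat_snoc m u : length u = m ->
  stat m u = stat (S m) (u ++ [true]) + stat (S m) (u ++ [false]).
Proof.
  revert u; induction m as [|m IH]; intros u Hu.
  - destruct u; [|discriminate]. cbn. unfold exit_rate. cbn. field. lra.
  - symmetry. change (stat (S m) u) with (balance (stat m) (S (S m)) u).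
    apply (balance_unique (S m) _
             (fun v => stat (S (S m)) (v ++ [true]) + stat (S (S m)) (v ++ [false])));
      [|exact Hu|pose proof (count_occ_bound Bool.bool_dec false u); lia].
    intros [|a w] Hw; [discriminate|]. injection Hw as Hw.
    pose proof (stat_balanced (S m) ((a :: w) ++ [true])) as Et.
    pose proof (stat_balanced (S m) ((a :: w) ++ [false])) as Ef.
    specialize (Et ltac:(rewrite length_app; cbn; lia)).
    specialize (Ef ltac:(rewrite length_app; cbn; lia)).
    unfold balanced, exit_rate in *.
    rewrite sumL_upflips_snoc, count_occ_app, plus_INR in Et, Ef.
    change (INR (count_occ Bool.bool_dec [true] true)) with 1 in Et.
    change (INR (count_occ Bool.bool_dec [false] true)) with 0 in Ef.
    cbn [hd tl app] in Et, Ef |- *. rewrite sumL_add, (IH w Hw). nra.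
Qed.

Lemma stat_consistent : consistent_family stat.
Proof.
  split.
  - intros n. split; [intros; apply stat_nonneg|].
    induction n as [|n IH]; [cbn; ring|].
    rewrite sumL_states_snoc, <- IH. apply sumL_ext.
    intros u Hu%In_states. symmetry. now apply stat_snoc.
  - intros n s Hs%In_states. now apply stat_snoc.
Qed.

Lemma stat_stationary n s : In s (states n) -> Lstar la lb d n (stat n) s = 0.
Proof.
  intros Hs%In_states. destruct n as [|m], s as [|a u]; try discriminate.
  - unfold Lstar, jumps. cbn. ring.
  - injection Hs as Hu. rewrite (Lstar_cons _ _ _ m) by exact Hu.
    rewrite <- (stat_snoc m u Hu).
    pose proof (stat_balanced m (a :: u) ltac:(cbn; lia)) as Hbal.
    unfold balanced, exit_rate in Hbal. cbn [hd tl] in Hbal. lra.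
Qed.

End Stationary.

Theorem limit_prob_fast la lb d (hla : 0 < la) (hlb : 0 < lb) (hd : 0 < d)
  (mu : nat -> list bool -> R) (p : R -> nat -> list bool -> R) :
  consistent_family mu -> (forall n s, p 0 n s = mu n s) ->
  (forall n s t, In s (states n) ->
     derivable_pt_lim (fun u => p u n s) t (Lstar la lb d n (p t n) s)) ->
  forall i : nat, (1 <= i)%nat ->
    limit_at_infty (fun t => prob_fast (p t) i)
      (la / (la + lb) * ((la + lb) / (la + lb + d)) ^ i) /\
    limit_at_infty (fun t => prob_fast2 (p t) i)
      (la ^ 2 / ((la + lb) * (la + lb + d)) * ((la + lb) / (la + lb + 2 * d)) ^ i).
Proof.
  intros Hmu Hinit Hforward [|k] Hk; [lia|]. split.
  - apply (limit_at_infty_ext (fun t => moment (S k) (fast k) (p t (S k)))).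
    + intros t. symmetry. apply prob_fast_moment.
    + apply (limit_moment_fast la lb d mu); auto.
  - apply (limit_at_infty_ext (fun t => moment (S (S k)) (fast_pair k) (p t (S (S k))))).
    + intros t. symmetry. now apply prob_fast2_moment.
    + apply (limit_moment_fast_pair la lb d mu); auto.
Qed.

Theorem mainTheorem8 (la lb d : R) (hla : 0 < la) (hlb : 0 < lb) (hd : 0 < d) :
  (exists pi : nat -> list bool -> R,
     consistent_family pi /\
     (forall n s, In s (states n) -> Lstar la lb d n (pi n) s = 0) /\
     (forall i : nat, (1 <= i)%nat ->
        prob_fast pi i = la / (la + lb) * ((la + lb) / (la + lb + d)) ^ i /\
        prob_fast2 pi i =
          la ^ 2 / ((la + lb) * (la + lb + d)) * ((la + lb) / (la + lb + 2 * d)) ^ i))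
  /\
  (forall (mu : nat -> list bool -> R) (p : R -> nat -> list bool -> R),
     consistent_family mu ->
     (forall n s, p 0 n s = mu n s) ->
     (forall n s t, In s (states n) ->
        derivable_pt_lim (fun u => p u n s) t (Lstar la lb d n (p t n) s)) ->
     forall i : nat, (1 <= i)%nat ->
       (forall eps, eps > 0 -> exists T, forall t, t >= T ->
          Rabs (prob_fast (p t) i - la / (la + lb) * ((la + lb) / (la + lb + d)) ^ i) < eps) /\
       (forall eps, eps > 0 -> exists T, forall t, t >= T ->
          Rabs (prob_fast2 (p t) i -
                la ^ 2 / ((la + lb) * (la + lb + d)) * ((la + lb) / (la + lb + 2 * d)) ^ i) < eps)).
Proof.
  split; [|exact (limit_prob_fast la lb d hla hlb hd)].
  exists (stat la lb d). split; [|split].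
  - now apply stat_consistent.
  - now apply stat_stationary.
  - (* started from itself, the stationary law is a constant solution of the forward equation *)
    intros i Hi.
    destruct (limit_prob_fast la lb d hla hlb hd (stat la lb d) (fun _ => stat la lb d))
      with (i := i) as [Hfast Hpair]; auto.
    + now apply stat_consistent.
    + intros n s t Hs. rewrite stat_stationary by auto. apply derivable_pt_lim_const.
    + split; apply limit_at_infty_const; assumption.
Qed.
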